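(* Let $n=2$ and $z=x+iy$ with $x,y\in\mathbb{R}$, $y\neq0$. Then $$\psi(x+iy)=\begin{cases}\frac83|y|, & x^2+y^2\le1 \text{ and } |x|\le\frac12,\\[2pt] \frac{|y|}{3|x|^3}, & (|x|-1)^2+y^2\le1 \text{ and } |x|>\frac12,\\[2pt] \frac{8|y|}{3(x^2+y^2)^3}, & (|x|-1)^2+y^2>1\text{ and } x^2+y^2>1.\end{cases}$$
   Context: For $n=2$ and $z\in\mathbb{C}\setminus\mathbb{R}$, $D_z$ is the set of $t\in\mathbb{R}$ with $|t|\le1$, $\left|z\,t\left(z-\frac{\Im z^{2}}{\Im z}\right)\right|\le 1$ and $\left|t\frac{\Im z^{2}}{\Im z}\right|\le 1$, and $$\psi(z)=\frac{1}{|\Im z|}\int_{D_z}\left|t\left(2z-\frac{\Im z^{2}}{\Im z}\right)\right|^2dt.$$ *)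

From Stdlib Require Import Reals.
Open Scope R_scope.

Record C := mkC { Re : R; Im : R }.
Definition Cmul (a b : C) : C :=
  mkC (Re a * Re b - Im a * Im b) (Re a * Im b + Im a * Re b).
Definition Csub (a b : C) : C := mkC (Re a - Re b) (Im a - Im b).
Definition Cscal (r : R) (a : C) : C := mkC (r * Re a) (r * Im a).
Definition RtoC (r : R) : C := mkC r 0.
Definition Cmod (a : C) : R := sqrt (Re a ^ 2 + Im a ^ 2).

Definition qz (z : C) : R := Im (Cmul z z) / Im z.

Definition inD (z : C) (t : R) : Prop :=
  Rabs t <= 1 /\
  Cmod (Cmul (Cscal t z) (Csub z (RtoC (qz z)))) <= 1 /\
  Rabs (t * qz z) <= 1.

Definition inD_dec (z : C) (t : R) : {inD z t} + {~ inD z t}.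
Proof.
  unfold inD.
  destruct (Rle_dec (Rabs t) 1) as [h1|h1]; [|right; tauto].
  destruct (Rle_dec (Cmod (Cmul (Cscal t z) (Csub z (RtoC (qz z))))) 1)
    as [h2|h2]; [|right; tauto].
  destruct (Rle_dec (Rabs (t * qz z)) 1) as [h3|h3]; [|right; tauto].
  left; tauto.
Defined.

(* integrand of psi, extended by 0 outside D_z; D_z is contained in [-1,1] *)
Definition psi_integrand (z : C) (t : R) : R :=
  if inD_dec z t
  then Cmod (Cscal t (Csub (Cscal 2 z) (RtoC (qz z)))) ^ 2
  else 0.

From Pilot Require
Import Defs.
From Stdlib Require Import Reals Lra Psatz.
From Coquelicot Require Import Coquelicot.
Import Defs.
Open Scope R_scope.

(* For z = x + iy one has Im z^2 / Im z = 2x, so z - 2x = conj z and 2z - 2x = 2iy.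
   Hence the constraints defining D_z read |t| <= 1, |t| |z|^2 <= 1 and 2 |t| |x| <= 1,
   i.e. D_z = [-m, m] with m = min (1, 1/|z|^2, 1/(2|x|)), and on D_z the integrand is
   4 y^2 t^2.  Thus psi(z) = 8 |y| m^3 / 3, and the three cases of the theorem are the
   three regions where each of the bounds is the smallest one. *)

Lemma is_RInt_zero_on (f : R -> R) (a b : R) : a <= b ->
  (forall t, a < t < b -> f t = 0) -> is_RInt f a b 0.
Proof.
  intros hab hf.
  replace 0 with (scal (b - a) 0) by (unfold scal; simpl; unfold mult; simpl; ring).
  apply is_RInt_ext with (fun _ => 0); [|apply (@is_RInt_const R_NormedModule)].
  intros t ht; rewrite Rmin_left, Rmax_right in ht by lra.
  symmetry; exact (hf t ht).
Qed.

Lemma is_RInt_scaled_square (c a b : R) :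
  is_RInt (fun t => c * t ^ 2) a b (c * (b ^ 3 - a ^ 3) / 3).
Proof.
  replace (c * (b ^ 3 - a ^ 3) / 3)
    with (minus ((fun t => c * t ^ 3 / 3) b) ((fun t => c * t ^ 3 / 3) a))
    by (unfold minus, plus, opp; simpl; field).
  apply (@is_RInt_derive R_CompleteNormedModule (fun t => c * t ^ 3 / 3)).
  - intros t _; auto_derive; [exact I | field].
  - intros t _; apply (@ex_derive_continuous R_AbsRing R_NormedModule).
    auto_derive; exact I.
Qed.

Lemma is_RInt_truncated_square (f : R -> R) (c m : R) : 0 <= m <= 1 ->
  (forall t, Rabs t <= m -> f t = c * t ^ 2) ->
  (forall t, m < Rabs t -> f t = 0) ->
  is_RInt f (-1) 1 (2 * c * m ^ 3 / 3).
Proof.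
  intros hm hin hout.
  assert (left_part : is_RInt f (-1) (-m) 0).
  { apply is_RInt_zero_on; [lra|].
    intros t ht; apply hout; rewrite Rabs_left; lra. }
  assert (middle_part : is_RInt f (-m) m (c * (m ^ 3 - (- m) ^ 3) / 3)).
  { apply is_RInt_ext with (fun t => c * t ^ 2); [|apply is_RInt_scaled_square].
    intros t ht; rewrite Rmin_left, Rmax_right in ht by lra.
    symmetry; apply hin, Rabs_le; lra. }
  assert (right_part : is_RInt f m 1 0).
  { apply is_RInt_zero_on; [lra|].
    intros t ht; apply hout; rewrite Rabs_right; lra. }
  replace (2 * c * m ^ 3 / 3) with (plus (plus 0 (c * (m ^ 3 - (- m) ^ 3) / 3)) 0)
    by (unfold plus; simpl; field).
  exact (is_RInt_Chasles _ _ _ _ _ _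
           (is_RInt_Chasles _ _ _ _ _ _ left_part middle_part) right_part).
Qed.

(* [m] is the smallest of the bounds [1], [1/a], [1/b]. *)
Lemma abs_le_min3_iff (a b m t : R) : 0 <= a -> 0 <= b -> 0 < m <= 1 ->
  m * a <= 1 -> m * b <= 1 -> m = 1 \/ m * a = 1 \/ m * b = 1 ->
  (Rabs t <= 1 /\ Rabs t * a <= 1 /\ Rabs t * b <= 1 <-> Rabs t <= m).
Proof.
  intros ha hb hm hma hmb hmin; pose proof (Rabs_pos t).
  split.
  - intros (h1 & ha' & hb'); destruct hmin as [-> | [hm' | hm']]; nra.
  - intro ht; repeat split; nra.
Qed.

Lemma qz_mkC (x y : R) : y <> 0 -> qz (mkC x y) = 2 * x.
Proof. intro hy; unfold qz, Cmul; cbn [Re Im]; field; exact hy. Qed.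

Lemma Cmod_psi_integrand_mkC (x y t : R) : y <> 0 ->
  Cmod (Cscal t (Csub (Cscal 2 (mkC x y)) (RtoC (qz (mkC x y))))) ^ 2
  = 4 * y ^ 2 * t ^ 2.
Proof.
  intro hy; rewrite qz_mkC by exact hy.
  unfold Cmod, Cscal, Csub, RtoC; cbn [Re Im].
  rewrite pow2_sqrt by nra; ring.
Qed.

Lemma Cmod_inD_constraint (x y t : R) : y <> 0 ->
  Cmod (Cmul (Cscal t (mkC x y)) (Csub (mkC x y) (RtoC (qz (mkC x y)))))
  = Rabs t * (x ^ 2 + y ^ 2).
Proof.
  intro hy; rewrite qz_mkC by exact hy.
  unfold Cmod, Cmul, Cscal, Csub, RtoC; cbn [Re Im].
  replace ((t * x * (x - 2 * x) - t * y * (y - 0)) ^ 2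
           + (t * x * (y - 0) + t * y * (x - 2 * x)) ^ 2)
    with ((Rabs t * (x ^ 2 + y ^ 2)) ^ 2)
    by (rewrite Rpow_mult_distr, pow2_abs; ring).
  apply sqrt_pow2, Rmult_le_pos; [apply Rabs_pos | nra].
Qed.

Lemma inD_mkC_iff (x y t : R) : y <> 0 ->
  (inD (mkC x y) t <->
   Rabs t <= 1 /\ Rabs t * (x ^ 2 + y ^ 2) <= 1 /\ Rabs t * (2 * Rabs x) <= 1).
Proof.
  intro hy; unfold inD.
  rewrite Cmod_inD_constraint, qz_mkC by exact hy.
  rewrite Rabs_mult, (Rabs_mult 2), (Rabs_right 2) by lra.
  reflexivity.
Qed.

Lemma is_RInt_psi_integrand (x y m : R) : y <> 0 -> 0 < m <= 1 ->
  m * (x ^ 2 + y ^ 2) <= 1 -> m * (2 * Rabs x) <= 1 ->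
  m = 1 \/ m * (x ^ 2 + y ^ 2) = 1 \/ m * (2 * Rabs x) = 1 ->
  is_RInt (psi_integrand (mkC x y)) (-1) 1 (8 * y ^ 2 * m ^ 3 / 3).
Proof.
  intros hy hm hz hx hmin.
  assert (hD : forall t, inD (mkC x y) t <-> Rabs t <= m).
  { intro t; rewrite inD_mkC_iff by exact hy.
    apply abs_le_min3_iff; try assumption; [nra | pose proof (Rabs_pos x); lra]. }
  replace (8 * y ^ 2 * m ^ 3 / 3) with (2 * (4 * y ^ 2) * m ^ 3 / 3) by field.
  apply is_RInt_truncated_square; [lra | |];
    intros t ht; unfold psi_integrand; destruct inD_dec as [hin | hout].
  - apply Cmod_psi_integrand_mkC; exact hy.
  - exfalso; apply hout, hD; exact ht.
  - apply hD in hin; lra.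
  - reflexivity.
Qed.

Lemma is_RInt_psi_integrand_disc (x y : R) : y <> 0 ->
  x ^ 2 + y ^ 2 <= 1 -> Rabs x <= 1 / 2 ->
  is_RInt (psi_integrand (mkC x y)) (-1) 1 (8 * y ^ 2 / 3).
Proof.
  intros hy hz hx.
  replace (8 * y ^ 2 / 3) with (8 * y ^ 2 * 1 ^ 3 / 3) by field.
  apply is_RInt_psi_integrand; lra.
Qed.

Lemma is_RInt_psi_integrand_shifted_disc (x y : R) : y <> 0 ->
  (Rabs x - 1) ^ 2 + y ^ 2 <= 1 -> Rabs x > 1 / 2 ->
  is_RInt (psi_integrand (mkC x y)) (-1) 1 (8 * y ^ 2 * (/ (2 * Rabs x)) ^ 3 / 3).
Proof.
  intros hy hz hx; pose proof (pow2_abs x).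
  assert (hinv : / (2 * Rabs x) * (2 * Rabs x) = 1) by (field; lra).
  assert (hpos : 0 < / (2 * Rabs x)) by (apply Rinv_0_lt_compat; lra).
  apply is_RInt_psi_integrand; [exact hy | split | | | right; right]; nra.
Qed.

Lemma is_RInt_psi_integrand_outside (x y : R) : y <> 0 ->
  (Rabs x - 1) ^ 2 + y ^ 2 > 1 -> x ^ 2 + y ^ 2 > 1 ->
  is_RInt (psi_integrand (mkC x y)) (-1) 1 (8 * y ^ 2 * (/ (x ^ 2 + y ^ 2)) ^ 3 / 3).
Proof.
  intros hy hz hx; pose proof (pow2_abs x); pose proof (Rabs_pos x).
  assert (hinv : / (x ^ 2 + y ^ 2) * (x ^ 2 + y ^ 2) = 1) by (field; lra).
  assert (hpos : 0 < / (x ^ 2 + y ^ 2)) by (apply Rinv_0_lt_compat; lra).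
  apply is_RInt_psi_integrand; [exact hy | split | | | right; left]; nra.
Qed.

(* The three regions cover the plane, since
   x^2 + y^2 - ((|x| - 1)^2 + y^2) = 2|x| - 1. *)
Lemma ex_RInt_psi_integrand (x y : R) : y <> 0 ->
  ex_RInt (psi_integrand (mkC x y)) (-1) 1.
Proof.
  intro hy; pose proof (pow2_abs x); pose proof (Rabs_pos x).
  destruct (Rle_dec ((Rabs x - 1) ^ 2 + y ^ 2) 1) as [hs | hs].
  - destruct (Rle_dec (Rabs x) (1 / 2)) as [hx | hx].
    + eexists; apply is_RInt_psi_integrand_disc; [assumption | nra | assumption].
    + eexists; apply is_RInt_psi_integrand_shifted_disc; [assumption | assumption | lra].
  - destruct (Rle_dec (x ^ 2 + y ^ 2) 1) as [hz | hz].
    + eexists; apply is_RInt_psi_integrand_disc; [assumption | assumption | nra].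
    + eexists; apply is_RInt_psi_integrand_outside; lra.
Qed.

Theorem mainTheorem7 (x y : R) (hy : y <> 0) :
  exists pr : Riemann_integrable (psi_integrand (mkC x y)) (-1) 1,
    let psi := / Rabs y * RiemannInt pr in
    (x ^ 2 + y ^ 2 <= 1 -> Rabs x <= 1 / 2 -> psi = 8 / 3 * Rabs y) /\
    ((Rabs x - 1) ^ 2 + y ^ 2 <= 1 -> Rabs x > 1 / 2 ->
       psi = Rabs y / (3 * Rabs x ^ 3)) /\
    ((Rabs x - 1) ^ 2 + y ^ 2 > 1 -> x ^ 2 + y ^ 2 > 1 ->
       psi = 8 * Rabs y / (3 * (x ^ 2 + y ^ 2) ^ 3)).
Proof.
  exists (ex_RInt_Reals_0 _ _ _ (ex_RInt_psi_integrand x y hy)).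
  cbv zeta; rewrite <- RInt_Reals.
  assert (hy_abs : 0 < Rabs y) by (apply Rabs_pos_lt; exact hy).
  split; [|split]; intros h1 h2.
  - rewrite (is_RInt_unique _ _ _ _ (is_RInt_psi_integrand_disc x y hy h1 h2)).
    rewrite <- (pow2_abs y); field; lra.
  - rewrite (is_RInt_unique _ _ _ _ (is_RInt_psi_integrand_shifted_disc x y hy h1 h2)).
    rewrite <- (pow2_abs y); field; lra.
  - rewrite (is_RInt_unique _ _ _ _ (is_RInt_psi_integrand_outside x y hy h1 h2)).
    rewrite <- (pow2_abs y); field; nra.
Qed.
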